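(* Let $A\subseteq\mathbb{R}^n$ be finite (Euclidean metric) and $\beta>0$. For all $r,k>0$: (i) $\mathrm{DCr}^\beta_{r,k}(A)\subseteq\mathrm{Cov}_{(1+\beta^{-1})r,k}(A)$, and (ii) $\mathrm{Cov}_{r,k}(A)\subseteq\mathrm{DCr}^\beta_{\max\{1,2\beta\}r,k}(A)$.
   Context: $d$ Euclidean, $\bar B_d(x,r)=\{y:d(x,y)\le r\}$. For finite $A$, $k>0$, $x\in\mathbb{R}^n$, $\mathrm{core}^A_k(x)$ is the distance from $x$ to its $\lceil k\rceil$-th nearest neighbor in $A$ (each point of $A$ counted once, $x$ itself counting if $x\in A$); equivalently $\min\{r\ge0:|\bar B_d(x,r)\cap A|\ge k\}$, and $\infty$ if $k>|A|$. Multicover: $\mathrm{Cov}_{r,k}(A)=\{x:|\bar B_d(x,r)\cap A|\ge k\}$. For $\beta>0$: $\Lambda^\beta_k(a,x)=\max\{\beta\,\mathrm{core}^A_k(a),d(a,x)\}$, $B^\beta_{r,k}(a)=\{x:\Lambda^\beta_k(a,x)\le r\}$. $\mathrm{Vor}_A(a)=\{x:d(a,x)\le d(a',x)\ \forall a'\in A\}$. Delaunay core bifiltration: $\mathrm{DCr}^\beta_{r,k}(A)=\bigcup_{a\in A}\big(B^\beta_{r,k}(a)\cap\mathrm{Vor}_A(a)\big)$. *)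

From HB Require Import structures.
From mathcomp Require Import all_boot all_order all_algebra.
From mathcomp Require Import finmap.
From mathcomp Require Import all_classical all_reals all_analysis.
Set Implicit Arguments. Unset Strict Implicit. Unset Printing Implicit Defensive.
Import Order.TTheory GRing.Theory Num.Theory.
Local Open Scope classical_set_scope.
Local Open Scope ring_scope.

Section Delaunay.
Variables (R : realType) (n : nat).
Notation V := 'rV[R]_n.

Definition edist (x y : V) : R := Num.sqrt (\sum_(i < n) (x 0 i - y 0 i) ^+ 2).

Definition ballcount (A : {fset V}) (x : V) (r : R) : nat :=
  size (enum_fset [fset a in A | edist x a <= r]%fset).

(* core^A_k(x) = min { r >= 0 : |B(x,r) ∩ A| >= k }, +oo if no such r
   (the infimum equals the minimum when it is attained; empty set gives +oo) *)
Definition core (A : {fset V}) (k : R) (x : V) : \bar R :=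
  ereal_inf [set r%:E | r in [set r : R | 0 <= r /\ k <= (ballcount A x r)%:R]].

Definition Cov (r k : R) (A : {fset V}) : set V :=
  [set x | k <= (ballcount A x r)%:R].

Definition Lambda (beta : R) (A : {fset V}) (k : R) (a x : V) : \bar R :=
  Order.max (beta%:E * core A k a)%E (edist a x)%:E.

Definition Bball (beta : R) (A : {fset V}) (r k : R) (a : V) : set V :=
  [set x | (Lambda beta A k a x <= r%:E)%E].

Definition Vor (A : {fset V}) (a : V) : set V :=
  [set x | forall a', a' \in A -> edist a x <= edist a' x].

Definition DCr (beta r k : R) (A : {fset V}) : set V :=
  \bigcup_(a in [set a | a \in A]) (Bball beta A r k a `&` Vor A a).

End Delaunay.

(* For (i): a point x of B^beta_{r,k}(a) lies within r of a, and the ball of radius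
   core_k(a) <= r/beta around a holds k points of A, all within (1 + 1/beta) r of x.
   For (ii): if x is covered k times at radius r, let a be a point of A nearest to x,
   so x lies in Vor(a) and d(a, x) <= r; the ball of radius 2r around a contains the
   ball of radius r around x, whence core_k(a) <= 2r and Lambda_k(a, x) <= max(1, 2 beta) r.
   Besides the triangle inequality (Minkowski), the one fact needed is that the
   infimum defining core_k(a) is attained, at the distance from a to a point of A. *)
From Pilot Require Import Defs.
From HB Require Import structures.
From mathcomp Require Import all_boot all_order all_algebra.
From mathcomp Require Import finmap.
From mathcomp Require Import all_classical all_reals all_analysis.
From mathcomp Require Import ring lra.
Import Order.TTheory GRing.Theory Num.Theory.
Local Open Scope classical_set_scope.
Local Open Scope ring_scope.
Local Notation edist := Defs.edist.

Set Implicit Arguments.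
Unset Strict Implicit.
Unset Printing Implicit Defensive.

Lemma CauchySchwarz_sum (R : realFieldType) (I : finType) (u v : I -> R) :
  (\sum_i u i * v i) ^+ 2 <= (\sum_i u i ^+ 2) * (\sum_i v i ^+ 2).
Proof.
have uv : (\sum_i u i ^+ 2) * (\sum_i v i ^+ 2) = \sum_i \sum_j u i ^+ 2 * v j ^+ 2.
  by rewrite mulr_suml; apply: eq_bigr => i _; rewrite mulr_sumr.
have vu : (\sum_i u i ^+ 2) * (\sum_i v i ^+ 2) = \sum_i \sum_j u j ^+ 2 * v i ^+ 2.
  rewrite mulrC mulr_suml; apply: eq_bigr => i _; rewrite mulr_sumr.
  by apply: eq_bigr => j _; rewrite mulrC.
have sq : 2 * (\sum_i u i * v i) ^+ 2 = \sum_i \sum_j 2 * (u i * v i) * (u j * v j).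
  rewrite expr2 mulr_suml mulr_sumr; apply: eq_bigr => i _.
  by rewrite !mulr_sumr; apply: eq_bigr => j _; ring.
have lagrange : \sum_i \sum_j (u i * v j - u j * v i) ^+ 2 =
    2 * ((\sum_i u i ^+ 2) * (\sum_i v i ^+ 2)) - 2 * (\sum_i u i * v i) ^+ 2.
  rewrite mulr2n mulrDl mul1r {1}uv vu sq -big_split -sumrB /=.
  apply: eq_bigr => i _; rewrite -big_split -sumrB /=.
  by apply: eq_bigr => j _; ring.
have : 0 <= \sum_i \sum_j (u i * v j - u j * v i) ^+ 2.
  by apply: sumr_ge0 => i _; apply: sumr_ge0 => j _; apply: sqr_ge0.
rewrite lagrange; lra.
Qed.

Lemma Minkowski_sum (R : rcfType) (I : finType) (u v : I -> R) :
  Num.sqrt (\sum_i (u i + v i) ^+ 2) <=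
  Num.sqrt (\sum_i u i ^+ 2) + Num.sqrt (\sum_i v i ^+ 2).
Proof.
set U := \sum_i u i ^+ 2; set W := \sum_i v i ^+ 2; set P := \sum_i u i * v i.
have U0 : 0 <= U by apply: sumr_ge0 => i _; apply: sqr_ge0.
have W0 : 0 <= W by apply: sumr_ge0 => i _; apply: sqr_ge0.
have expand : \sum_i (u i + v i) ^+ 2 = U + 2 * P + W.
  rewrite /U /W /P mulr_sumr -!big_split /=.
  by apply: eq_bigr => i _; ring.
have P_le : P <= Num.sqrt U * Num.sqrt W.
  rewrite -sqrtrM //; have [P0|P0] := lerP P 0; first exact: le_trans P0 (sqrtr_ge0 _).
  rewrite -(ger0_norm (ltW P0)) -sqrtr_sqr ler_sqrt ?mulr_ge0 //.
  exact: CauchySchwarz_sum.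
rewrite expand -[leRHS](ger0_norm (addr_ge0 (sqrtr_ge0 U) (sqrtr_ge0 W))).
rewrite -sqrtr_sqr ler_sqrt ?sqr_ge0 // sqrrD !sqr_sqrtr //; lra.
Qed.

Lemma fset_arg_max (T : choiceType) (d : Order.disp_t) (O : orderType d)
    (F : {fset T}) (f : T -> O) (x : T) :
  x \in F -> exists2 b, b \in F & forall c, c \in F -> (f c <= f b)%O.
Proof.
move=> xF.
case: (@arg_maxP _ _ F (FSetSub xF) xpredT (fun i => f (val i)) isT) => b _ bmax.
by exists (val b) => [|c cF]; [exact: valP | exact: (bmax (FSetSub cF))].
Qed.

Section Delaunay.
Variables (R : realType) (n : nat).
Local Notation V := 'rV[R]_n.
Implicit Types (A : {fset V}) (a b x y : V) (beta r s k : R).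

Lemma edist_ge0 x y : 0 <= edist x y.
Proof. exact: sqrtr_ge0. Qed.

Lemma edistC x y : edist x y = edist y x.
Proof. by rewrite /edist; congr Num.sqrt; apply: eq_bigr => i _; ring. Qed.

Lemma edist_triangle x y z : edist x z <= edist x y + edist y z.
Proof.
rewrite /edist (eq_bigr (fun i => ((x 0 i - y 0 i) + (y 0 i - z 0 i)) ^+ 2)).
  exact: Minkowski_sum.
by move=> i _; rewrite addrA subrK.
Qed.

Lemma ballcount_le A x y r s :
  (forall b, b \in A -> edist x b <= r -> edist y b <= s) ->
  (ballcount A x r <= ballcount A y s)%N.
Proof.
move=> sub; apply: fsubset_leq_card; apply/fsubsetP => b; rewrite !inE /=.
by move=> /andP[bA xb]; rewrite bA sub.
Qed.

Lemma ballcount_witness A x r k :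
  0 < k -> k <= (ballcount A x r)%:R -> exists2 b, b \in A & edist x b <= r.
Proof.
move=> k0 kle; have /fset0Pn[b] : [fset c in A | edist x c <= r]%fset != fset0.
  rewrite -cardfs_gt0 lt0n; apply: contraTneq kle.
  by rewrite /ballcount => ->; rewrite -ltNge.
by rewrite !inE /= => /andP[bA xb]; exists b.
Qed.

(* Shrinking the radius to the farthest point of A inside the ball loses no point. *)
Lemma ballcount_at_dist A x s k :
  0 < k -> k <= (ballcount A x s)%:R ->
  exists2 b, b \in A & edist x b <= s /\ k <= (ballcount A x (edist x b))%:R.
Proof.
move=> k0 kle; have [c cA xc] := ballcount_witness k0 kle.
have cin : c \in [fset b in A | edist x b <= s]%fset by rewrite !inE /= cA xc.
have [b] := fset_arg_max (edist x) cin; rewrite !inE /= => /andP[bA xb] bmax.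
exists b => //; split => //; apply: le_trans kle _; rewrite ler_nat.
by apply: ballcount_le => c' c'A xc'; apply: bmax; rewrite !inE /= c'A xc'.
Qed.

Lemma core_le A k a t :
  0 <= t -> k <= (ballcount A a t)%:R -> (core A k a <= t%:E)%E.
Proof. by move=> t0 kt; apply: ereal_inf_lbound; exists t. Qed.

Lemma core_finite_radius A k a :
  core A k a != +oo%E -> exists2 s, 0 <= s & k <= (ballcount A a s)%:R.
Proof.
move=> core_fin; apply: contrapT => none; move/eqP: core_fin; apply.
rewrite /core (_ : [set _%:E | _ in _] = set0) ?ereal_inf0 //.
by apply/seteqP; split => // y [t [t0 kt] _]; apply: none; exists t.
Qed.

Lemma core_attained A k a :
  0 < k -> core A k a != +oo%E ->
  exists m, [/\ 0 <= m, k <= (ballcount A a m)%:R & core A k a = m%:E].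
Proof.
move=> k0 /core_finite_radius[s s0 ks].
have [b0 b0A [_ kb0]] := ballcount_at_dist k0 ks.
have b0in : b0 \in [fset b in A | k <= (ballcount A a (edist a b))%:R]%fset.
  by rewrite !inE /= b0A kb0.
have [b] := fset_arg_max (fun c => - edist a c) b0in.
rewrite !inE /= => /andP[bA kb] bmin.
exists (edist a b); split => //; first exact: edist_ge0.
apply/le_anti/andP; split; first exact: core_le (edist_ge0 _ _) kb.
apply/ereal_infP => _ [t [t0 kt] <-]; rewrite lee_fin.
have [c cA [ct kc]] := ballcount_at_dist k0 kt.
have := bmin c; rewrite !inE /= cA kc => /(_ isT); lra.
Qed.

Lemma Bball_sub_Cov beta A r k a :
  0 < beta -> 0 < k -> Bball beta A r k a `<=` Cov ((1 + beta^-1) * r) k A.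
Proof.
move=> beta0 k0 x; rewrite /Bball /Lambda /= ge_max lee_fin => /andP[core_le_r ax].
have core_fin : core A k a != +oo%E.
  by apply: contraTneq core_le_r => ->; rewrite muleC gt0_mulye ?lte_fin.
have [m [m0 km core_m]] := core_attained k0 core_fin.
have m_le : m <= beta^-1 * r.
  rewrite -(ler_pM2l beta0) mulrA divff ?gt_eqF // mul1r -lee_fin EFinM -core_m.
  exact: core_le_r.
rewrite /Cov /=; apply: le_trans km _; rewrite ler_nat; apply: ballcount_le => b _ ab.
rewrite mulrDl mul1r; apply: le_trans (edist_triangle x a b) _.
by rewrite edistC; apply: lerD => //; apply: le_trans m_le.
Qed.

Lemma DCr_sub_Cov beta A r k :
  0 < beta -> 0 < k -> DCr beta r k A `<=` Cov ((1 + beta^-1) * r) k A.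
Proof. by move=> beta0 k0 x [a _ [xB _]]; apply: Bball_sub_Cov xB. Qed.

Lemma Vor_nearest A x c : c \in A -> exists2 a, a \in A & Vor A a x.
Proof.
move=> cA; have [a aA amax] := fset_arg_max (fun b => - edist b x) cA.
by exists a => // a' a'A; have := amax a' a'A; lra.
Qed.

Lemma Cov_Vor_sub_Bball beta A r k a x :
  0 <= beta -> 0 < k -> Cov r k A x -> a \in A -> Vor A a x ->
  Bball beta A (Num.max 1 (2 * beta) * r) k a x.
Proof.
move=> beta0 k0 kx aA xVa; have [b bA xb] := ballcount_witness k0 kx.
have ax : edist a x <= r by rewrite (le_trans (xVa b bA)) // edistC.
have r0 : 0 <= r := le_trans (edist_ge0 a x) ax.
have core_2r : (core A k a <= (2 * r)%:E)%E.
  apply: core_le; first by rewrite mulr_ge0.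
  apply: le_trans kx _; rewrite ler_nat; apply: ballcount_le => c _ xc.
  by apply: le_trans (edist_triangle a x c) _; lra.
rewrite /Bball /Lambda /= ge_max !lee_fin; apply/andP; split.
  apply: le_trans (lee_wpmul2l _ core_2r) _; first by rewrite lee_fin.
  by rewrite -EFinM lee_fin mulrA ler_wpM2r // (mulrC 2) le_max lexx orbT.
by apply: le_trans ax _; rewrite ler_peMl // le_max lexx.
Qed.

Lemma Cov_sub_DCr beta A r k :
  0 <= beta -> 0 < k -> Cov r k A `<=` DCr beta (Num.max 1 (2 * beta) * r) k A.
Proof.
move=> beta0 k0 x kx; have [c cA _] := ballcount_witness k0 kx.
have [a aA xVa] := Vor_nearest x cA.
by exists a => //; split => //; apply: Cov_Vor_sub_Bball.
Qed.

End Delaunay.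

Theorem mainTheorem7 (R : realType) (n : nat) (A : {fset 'rV[R]_n}) (beta : R)
  (hbeta : 0 < beta) :
  forall r k : R, 0 < r -> 0 < k ->
    DCr beta r k A `<=` Cov ((1 + beta^-1) * r) k A /\
    Cov r k A `<=` DCr beta (Num.max 1 (2 * beta) * r) k A.
Proof.
move=> r k _ k0; split; first exact: DCr_sub_Cov.
exact: Cov_sub_DCr (ltW hbeta) k0.
Qed.
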